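(* Let $\mathcal{P}$ be a grid polyomino, $I_{\mathcal{P}}$ its polyomino ideal and $J_{\mathcal{P}}$ its toric ideal. Then $I_{\mathcal{P}}=J_{\mathcal{P}}$.
   Context: A cell is $[a,a+(1,1)]$, $a\in\mathbb{N}^2$, with vertices $a,a+(1,0),a+(0,1),a+(1,1)$; a polyomino is a finite nonempty set of cells, any two joined by a sequence of cells in it with consecutive ones sharing an edge; $V(\mathcal{P})$ is the set of vertices of its cells; $S=\mathbb{K}[x_v\mid v\in V(\mathcal{P})]$, $\mathbb{K}$ a field. For $a\le b$ componentwise, $[a,b]=\{(p,q): a_1\le p\le b_1, a_2\le q\le b_2\}$; if $a_1<b_1$, $a_2<b_2$ it has diagonal corners $a,b$ and anti-diagonal corners $c=(a_1,b_2)$, $d=(b_1,a_2)$, and is an inner interval of $\mathcal{P}$ if all its cells lie in $\mathcal{P}$. $I_{\mathcal{P}}$ is generated by all $x_ax_b-x_cx_d$ for inner intervals $[a,b]$. Grid polyomino: let $m,n\ge1$, $r,s\ge1$, and for $i\in[r]$, $j\in[s]$ let $a_{ij},b_{ij}\in\mathbb{N}^2$ with $1<(a_{ij})_1<(b_{ij})_1<m$, $1<(a_{ij})_2<(b_{ij})_2<n$, such that (1) for each $i$, $(a_{i\ell})_1=(a_{ik})_1$ and $(b_{i\ell})_1=(b_{ik})_1$ for all $\ell,k\in[s]$; (2) for each $j$, $(a_{\ell j})_2=(a_{kj})_2$ and $(b_{\ell j})_2=(b_{kj})_2$ for all $\ell,k\in[r]$; (3) $(a_{i+1,j})_1=(b_{ij})_1+1$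 for $i\in[r-1]$ and $(a_{i,j+1})_2=(b_{ij})_2+1$ for $j\in[s-1]$. The grid polyomino $\mathcal{P}$ is the set of cells of $[(1,1),(m,n)]$ not contained in any $[a_{ij},b_{ij}]$; its holes are the sets of cells of the $[a_{ij},b_{ij}]$, with lower left corners $a_{ij}$. Toric ideal: $\mathcal{F}_{i,j}=\{(x,y)\in V(\mathcal{P}): x\le(a_{ij})_1,\ y\le(a_{ij})_2\}$. A horizontal edge interval is a set $\{(t,y):p\le t\le q\}$ with each $\{(t,y),(t+1,y)\}$, $p\le t<q$, an edge of a cell of $\mathcal{P}$; maximal if not strictly contained in another; vertical analogously. Each $a\in V(\mathcal{P})$ lies in a unique maximal horizontal edge interval $H(a)$ and maximal vertical one $V(a)$. With variables $h_H,v_V$ for maximal edge intervals and $w_{i,j}$, define $\varphi:S\to\mathbb{K}[h_H,v_V,w_{i,j}]$, $\varphi(x_a)=h_{H(a)}v_{V(a)}\prod_{(i,j):a\in\mathcal{F}_{i,j}}w_{i,j}$; $J_{\mathcal{P}}=\ker\varphi$. *)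

From HB Require Import structures.
From mathcomp Require Import all_boot all_order all_algebra.
From mathcomp Require Import mpoly.
Set Implicit Arguments. Unset Strict Implicit. Unset Printing Implicit Defensive.
Import GRing.Theory.

(* Lattice points are encoded in the box [0,M] x [0,N]; a cell is encoded by
   its lower-left corner (x,y), i.e. the cell [(x,y),(x+1,y+1)]. *)

Section Polyomino.
Variables (K : fieldType) (M N : nat) (cell : nat -> nat -> bool).

Definition pt := ('I_M.+1 * 'I_N.+1)%type.
Definition cx (v : pt) : nat := v.1.
Definition cy (v : pt) : nat := v.2.

Definition is_vertex (v : pt) : bool :=
  [exists c : pt, [&& cell (cx c) (cy c),
     cx c <= cx v <= (cx c).+1 & cy c <= cy v <= (cy c).+1]].

Definition vtx := {v : pt | is_vertex v}.

Definition Sring := {mpoly K[#|{: vtx}|]}.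
Definition xv (v : vtx) : Sring := 'X_(enum_rank v).

Definition inner (a b : pt) : bool :=
  [&& cx a < cx b, cy a < cy b &
   [forall c : pt, ((cx a <= cx c < cx b) && (cy a <= cy c < cy b))
                     ==> cell (cx c) (cy c)]].

Definition inner_binom (p : Sring) : Prop :=
  exists a b c d : vtx,
    [/\ inner (val a) (val b),
        cx (val c) = cx (val a) /\ cy (val c) = cy (val b),
        cx (val d) = cx (val b) /\ cy (val d) = cy (val a) &
        (p = xv a * xv b - xv c * xv d)%R].

Definition ideal_gen (R : comNzRingType) (G : R -> Prop) (p : R) : Prop :=
  exists s : seq (R * R), (forall q, q \in s -> G q.2) /\
                         (p = \sum_(q <- s) (q.1 * q.2))%R.

Definition polyomino_ideal (p : Sring) : Prop := ideal_gen inner_binom p.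

(* {(t,y),(t+1,y)} is an edge of a cell of P *)
Definition hedge (t y : nat) : bool := cell t y || ((0 < y) && cell t y.-1).
(* {(x,t),(x,t+1)} is an edge of a cell of P *)
Definition vedge (x t : nat) : bool := cell x t || ((0 < x) && cell x.-1 t).

Definition is_hint (H : {set pt}) : bool :=
  [exists p : 'I_M.+1, exists q : 'I_M.+1, exists y : 'I_N.+1,
    [&& p <= q,
        H == [set v : pt | (cy v == y) && (p <= cx v <= q)] &
        [forall t : 'I_M.+1, (p <= t < q) ==> hedge t y]]].

Definition is_vint (V : {set pt}) : bool :=
  [exists p : 'I_N.+1, exists q : 'I_N.+1, exists x : 'I_M.+1,
    [&& p <= q,
        V == [set v : pt | (cx v == x) && (p <= cy v <= q)] &
        [forall t : 'I_N.+1, (p <= t < q) ==> vedge x t]]].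

Definition is_maxh (H : {set pt}) : bool :=
  is_hint H && [forall H' : {set pt}, is_hint H' ==> ~~ (H \proper H')].
Definition is_maxv (V : {set pt}) : bool :=
  is_vint V && [forall V' : {set pt}, is_vint V' ==> ~~ (V \proper V')].

(* H(a), V(a): the (unique) maximal edge intervals containing a *)
Definition Hof (a : pt) : {set pt} :=
  odflt set0 [pick H : {set pt} | is_maxh H && (a \in H)].
Definition Vof (a : pt) : {set pt} :=
  odflt set0 [pick V : {set pt} | is_maxv V && (a \in V)].

(* the w-variables are indexed by a finite type I, and inF i a says a \in F_i *)
Variables (I : finType) (inF : I -> pt -> bool).

(* target variables: h_H (H a set of points), v_V, w_i *)
Definition tvar := ({set pt} + {set pt} + I)%type.
Definition Tring := {mpoly K[#|{: tvar}|]}.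
Definition yv (t : tvar) : Tring := 'X_(enum_rank t).

Definition phi_x (v : vtx) : Tring :=
  (yv (inl (inl (Hof (val v)))) * yv (inl (inr (Vof (val v)))) *
   \prod_(i | inF i (val v)) yv (inr i))%R.

Definition phi (p : Sring) : Tring :=
  mmap (fun c : K => (c%:MP)%R) (fun i => phi_x (enum_val i)) p.

Definition toric_ideal (p : Sring) : Prop := phi p = 0%R.

End Polyomino.

(* Grid polyomino data: holes [a i j, b i j], i < r, j < s (0-based indices). *)
Definition is_grid (m n r s : nat) (a b : 'I_r -> 'I_s -> (nat * nat)) : Prop :=
  [/\ (1 <= m /\ 1 <= n) /\ (1 <= r /\ 1 <= s),
      (forall i j, [/\ 1 < (a i j).1, (a i j).1 < (b i j).1 & (b i j).1 < m] /\
                   [/\ 1 < (a i j).2, (a i j).2 < (b i j).2 & (b i j).2 < n]),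
      (forall i l k, (a i l).1 = (a i k).1 /\ (b i l).1 = (b i k).1),
      (forall j l k, (a l j).2 = (a k j).2 /\ (b l j).2 = (b k j).2) &
      (forall (i i' : 'I_r) (j : 'I_s), val i' = (val i).+1 ->
          (a i' j).1 = (b i j).1 + 1) /\
      (forall (i : 'I_r) (j j' : 'I_s), val j' = (val j).+1 ->
          (a i j').2 = (b i j).2 + 1)].

Definition grid_cell (m n r s : nat) (a b : 'I_r -> 'I_s -> (nat * nat))
  (x y : nat) : bool :=
  [&& 1 <= x, x.+1 <= m, 1 <= y, y.+1 <= n &
      ~~ [exists i : 'I_r, exists j : 'I_s,
            [&& (a i j).1 <= x, x.+1 <= (b i j).1,
                (a i j).2 <= y & y.+1 <= (b i j).2]]].

Definition grid_inF (m n r s : nat) (a : 'I_r -> 'I_s -> (nat * nat))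
  (ij : 'I_r * 'I_s) (v : pt m n) : bool :=
  (cx v <= (a ij.1 ij.2).1) && (cy v <= (a ij.1 ij.2).2).

From mathcomp Require Import all_boot all_order all_algebra.
From mathcomp Require Import mpoly.
From mathcomp Require Import zify.
Set Implicit Arguments. Unset Strict Implicit. Unset Printing Implicit Defensive.
Import GRing.Theory.

(* I_P is contained in J_P because phi sends both monomials of an inner-interval
   binomial to the same monomial: the diagonal and the anti-diagonal corners lie on the
   same maximal edge intervals, and for a grid polyomino no quadrant F_{i,j} separates them.
   Conversely, a binomial of I_P trades the anti-diagonal corners of an inner interval for
   its diagonal ones, which strictly increases the sum of x*y over the monomial; so every
   monomial is congruent modulo I_P to a reduced one with the same image, and it suffices
   that phi is injective on reduced monomials.  For a grid polyomino, two reduced monomials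
   with equal images share their lexicographically least variable: vertical intervals force
   the same column, and a lower vertex of the same column in the second monomial would,
   through its maximal edge intervals and reducedness of the first, exhibit a hole whose
   neighbouring quadrant variable w divides the second image but not the first.  Cancelling
   the common variable, induction on the degree concludes. *)

Section MaximalSets.
Variables (T : finType) (Q : pred {set T}).

Definition maximal (A : {set T}) : bool :=
  Q A && [forall B : {set T}, Q B ==> ~~ (A \proper B)].

Definition max_around (w : T) : {set T} :=
  odflt set0 [pick A : {set T} | maximal A && (w \in A)].

Hypothesis Q_overlap_union : forall (A B : {set T}) w,
  Q A -> Q B -> w \in A -> w \in B -> Q (A :|: B).
Hypothesis Q_cover : forall w, exists A, Q A && (w \in A).

Lemma maximal_absorb (A B : {set T}) w :
  maximal A -> Q B -> w \in A -> w \in B -> B \subset A.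
Proof.
case/andP=> QA /forallP maxA QB wA wB.
have := maxA (A :|: B); rewrite (Q_overlap_union QA QB wA wB) /=.
by rewrite properEneq subsetUl andbT negbK eq_sym => /eqP/setUidPl.
Qed.

Lemma maximal_uniq (A B : {set T}) w :
  maximal A -> maximal B -> w \in A -> w \in B -> A = B.
Proof.
move=> mA mB wA wB; apply/eqP; rewrite eqEsubset.
have [QA QB] := (proj1 (andP mA), proj1 (andP mB)).
by rewrite (maximal_absorb mB QA wB wA) (maximal_absorb mA QB wA wB).
Qed.

Lemma max_aroundP w : maximal (max_around w) && (w \in max_around w).
Proof.
rewrite /max_around; case: pickP => [A //|no_max]; exfalso.
have [A0 QA0] := Q_cover w.
have [A /andP [QA wA] maxA] :=
  @arg_maxnP _ A0 (fun A => Q A && (w \in A)) (fun A => #|A|) QA0.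
move: (no_max A); rewrite wA andbT /maximal QA /=; move/negP; apply.
apply/forallP => B; apply/implyP => QB; apply/negP => ltAB.
have wB : w \in B by apply: subsetP (proper_sub ltAB) w wA.
have /= le_BA := maxA B (introT andP (conj QB wB)).
by have := proper_card ltAB; rewrite ltnNge le_BA.
Qed.

Lemma max_around_eq s t :
  max_around s = max_around t <-> exists2 A, Q A & (s \in A) && (t \in A).
Proof.
have /andP [ms sA] := max_aroundP s; have /andP [mt tA] := max_aroundP t.
split=> [eq_st | [A QA /andP [sA' tA']]].
  by exists (max_around s); [case/andP: ms | rewrite sA eq_st tA].
have tS : t \in max_around s by apply: subsetP (maximal_absorb ms QA sA sA') t tA'.
exact: maximal_uniq ms mt tS tA.
Qed.

End MaximalSets.

Section EdgeIntervals.
Variables (M N : nat) (cell : nat -> nat -> bool).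
Local Notation pt := (pt M N).

Definition hseg (y p q : nat) : {set pt} :=
  [set v : pt | (cy v == y) && (p <= cx v <= q)].
Definition vseg (x p q : nat) : {set pt} :=
  [set v : pt | (cx v == x) && (p <= cy v <= q)].

Lemma cx_le (v : pt) : cx v <= M.
Proof. by rewrite -ltnS ltn_ord. Qed.
Lemma cy_le (v : pt) : cy v <= N.
Proof. by rewrite -ltnS ltn_ord. Qed.

Lemma is_hintP (H : {set pt}) :
  is_hint cell H <-> exists p q y, [/\ p <= q <= M, y <= N, H = hseg y p q &
                                     forall t, p <= t < q -> hedge cell t y].
Proof.
split.
  case/existsP=> p /existsP [q /existsP [y /and3P [pq /eqP -> /forallP edges]]].
  exists p, q, y; split=> [||//|t tpq].
  - by rewrite pq -ltnS ltn_ord.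
  - by rewrite -ltnS ltn_ord.
  have tM : t < M.+1 by have := ltn_ord q; lia.
  by have := edges (Ordinal tM); rewrite /= tpq.
case=> p [q [y [pqM yN -> edges]]].
have pM : p < M.+1 by lia.
have qM : q < M.+1 by lia.
have yN' : y < N.+1 by lia.
apply/existsP; exists (Ordinal pM); apply/existsP; exists (Ordinal qM).
apply/existsP; exists (Ordinal yN'); rewrite /= eqxx /=; apply/andP; split; first lia.
by apply/forallP => t; apply/implyP => /edges.
Qed.

Lemma is_vintP (V : {set pt}) :
  is_vint cell V <-> exists p q x, [/\ p <= q <= N, x <= M, V = vseg x p q &
                                     forall t, p <= t < q -> vedge cell x t].
Proof.
split.
  case/existsP=> p /existsP [q /existsP [x /and3P [pq /eqP -> /forallP edges]]].
  exists p, q, x; split=> [||//|t tpq].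
  - by rewrite pq -ltnS ltn_ord.
  - by rewrite -ltnS ltn_ord.
  have tN : t < N.+1 by have := ltn_ord q; lia.
  by have := edges (Ordinal tN); rewrite /= tpq.
case=> p [q [x [pqN xM -> edges]]].
have pN : p < N.+1 by lia.
have qN : q < N.+1 by lia.
have xM' : x < M.+1 by lia.
apply/existsP; exists (Ordinal pN); apply/existsP; exists (Ordinal qN).
apply/existsP; exists (Ordinal xM'); rewrite /= eqxx /=; apply/andP; split; first lia.
by apply/forallP => t; apply/implyP => /edges.
Qed.

Lemma hint_overlap_union (A B : {set pt}) w :
  is_hint cell A -> is_hint cell B -> w \in A -> w \in B -> is_hint cell (A :|: B).
Proof.
case/is_hintP=> p1 [q1 [y1 [pq1 _ -> edges1]]].
case/is_hintP=> p2 [q2 [y2 [pq2 yN -> edges2]]].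
rewrite !inE => /andP [/eqP wy1 w1] /andP [/eqP wy2 w2].
apply/is_hintP; exists (minn p1 p2), (maxn q1 q2), y1; split=> [||/=|t t12]; try lia.
  by apply/setP => v; rewrite !inE; apply/idP/idP; lia.
have [tw|wt] := ltnP t (cx w).
  have [p1t|tp1] := leqP p1 t; first by apply: edges1; lia.
  by rewrite -wy1 wy2; apply: edges2; lia.
have [tq1|q1t] := ltnP t q1; first by apply: edges1; lia.
by rewrite -wy1 wy2; apply: edges2; lia.
Qed.

Lemma vint_overlap_union (A B : {set pt}) w :
  is_vint cell A -> is_vint cell B -> w \in A -> w \in B -> is_vint cell (A :|: B).
Proof.
case/is_vintP=> p1 [q1 [x1 [pq1 _ -> edges1]]].
case/is_vintP=> p2 [q2 [x2 [pq2 xM -> edges2]]].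
rewrite !inE => /andP [/eqP wx1 w1] /andP [/eqP wx2 w2].
apply/is_vintP; exists (minn p1 p2), (maxn q1 q2), x1; split=> [||/=|t t12]; try lia.
  by apply/setP => v; rewrite !inE; apply/idP/idP; lia.
have [tw|wt] := ltnP t (cy w).
  have [p1t|tp1] := leqP p1 t; first by apply: edges1; lia.
  by rewrite -wx1 wx2; apply: edges2; lia.
have [tq1|q1t] := ltnP t q1; first by apply: edges1; lia.
by rewrite -wx1 wx2; apply: edges2; lia.
Qed.

Lemma hint_cover (w : pt) : exists A, is_hint cell A && (w \in A).
Proof.
exists (hseg (cy w) (cx w) (cx w)); rewrite inE eqxx leqnn !andbT.
apply/is_hintP; exists (cx w), (cx w), (cy w); split=> [||//|]; last lia.
  by rewrite leqnn cx_le.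
exact: cy_le.
Qed.

Lemma vint_cover (w : pt) : exists A, is_vint cell A && (w \in A).
Proof.
exists (vseg (cx w) (cy w) (cy w)); rewrite inE eqxx leqnn !andbT.
apply/is_vintP; exists (cy w), (cy w), (cx w); split=> [||//|]; last lia.
  by rewrite leqnn cy_le.
exact: cx_le.
Qed.

Lemma Hof_eq (s t : pt) : Hof cell s = Hof cell t <->
  cy s = cy t /\ forall x, minn (cx s) (cx t) <= x < maxn (cx s) (cx t) -> hedge cell x (cy s).
Proof.
rewrite [Hof _ _](_ : _ = max_around (@is_hint M N cell) s) //.
rewrite [Hof _ _](_ : _ = max_around (@is_hint M N cell) t) //.
rewrite (max_around_eq hint_overlap_union hint_cover); split.
  case=> A /is_hintP [p [q [y [_ _ -> edges]]]].
  rewrite !inE => /andP [/andP [/eqP sy sr] /andP [/eqP ty tr]].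
  by split=> [|x xr]; [rewrite sy ty | rewrite sy; apply: edges; lia].
case=> st edges; exists (hseg (cy s) (minn (cx s) (cx t)) (maxn (cx s) (cx t))).
  apply/is_hintP; do 3 eexists; split; [|exact: cy_le s|reflexivity|exact: edges].
  by have := cx_le s; have := cx_le t; lia.
by rewrite !inE st eqxx; lia.
Qed.

Lemma Vof_eq (s t : pt) : Vof cell s = Vof cell t <->
  cx s = cx t /\ forall y, minn (cy s) (cy t) <= y < maxn (cy s) (cy t) -> vedge cell (cx s) y.
Proof.
rewrite [Vof _ _](_ : _ = max_around (@is_vint M N cell) s) //.
rewrite [Vof _ _](_ : _ = max_around (@is_vint M N cell) t) //.
rewrite (max_around_eq vint_overlap_union vint_cover); split.
  case=> A /is_vintP [p [q [x [_ _ -> edges]]]].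
  rewrite !inE => /andP [/andP [/eqP sx sr] /andP [/eqP tx tr]].
  by split=> [|y yr]; [rewrite sx tx | rewrite sx; apply: edges; lia].
case=> st edges; exists (vseg (cx s) (minn (cy s) (cy t)) (maxn (cy s) (cy t))).
  apply/is_vintP; do 3 eexists; split; [|exact: cx_le s|reflexivity|exact: edges].
  by have := cy_le s; have := cy_le t; lia.
by rewrite !inE st eqxx; lia.
Qed.

End EdgeIntervals.

Section IdealGen.
Local Open Scope ring_scope.
Variables (R : comNzRingType) (G : R -> Prop).

Lemma ideal_gen0 : ideal_gen G 0.
Proof. by exists [::]; rewrite big_nil. Qed.

Lemma ideal_genD p q : ideal_gen G p -> ideal_gen G q -> ideal_gen G (p + q).
Proof.
move=> [s1 [G1 ->]] [s2 [G2 ->]]; exists (s1 ++ s2); rewrite big_cat.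
by split=> // x; rewrite mem_cat => /orP [/G1|/G2].
Qed.

Lemma ideal_genMl r p : ideal_gen G p -> ideal_gen G (r * p).
Proof.
move=> [s [Gs ->]]; exists [seq (r * x.1, x.2) | x <- s]; split.
  by move=> _ /mapP [x xs ->]; exact: (Gs x xs).
by rewrite big_map mulr_sumr; apply: eq_bigr => x _; rewrite mulrA.
Qed.

Lemma mem_ideal_gen g : G g -> ideal_gen G g.
Proof.
move=> Gg; exists [:: (1, g)]; rewrite big_seq1 mul1r.
by split=> // q; rewrite inE => /eqP ->.
Qed.

End IdealGen.

Lemma sum_muln_gt0 (J : finType) (f g : J -> nat) :
  (0 < \sum_j f j * g j) = [exists j, (0 < f j) && (0 < g j)].
Proof.
rewrite lt0n sum_nat_eq0 negb_forall; apply: eq_existsb => j.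
by rewrite muln_eq0 negb_or !lt0n.
Qed.

Lemma rearrangement_ltn x1 x2 y1 y2 : x1 < x2 -> y1 < y2 ->
  x1 * y2 + x2 * y1 < x1 * y1 + x2 * y2.
Proof. nia. Qed.

Lemma mnm1_le n (mu : 'X_{1..n}) j : (U_(j) <= mu)%MM = (0 < mu j).
Proof.
apply/forallP/idP => [/(_ j)|mu_j i]; first by rewrite mnm1E eqxx.
by rewrite mnm1E; case: eqP => [<-|].
Qed.

Section ToricMap.
Local Open Scope ring_scope.
Variables (K : fieldType) (M N : nat) (cell : nat -> nat -> bool).
Variables (I : finType) (inF : I -> pt M N -> bool).
Local Notation vtx := (vtx M N cell).
Local Notation S := (Sring K M N cell).
Local Notation tvar := (tvar M N I).
Local Notation nv := #|{: vtx}|.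
Local Notation nt := #|{: tvar}|.
Local Notation rk := (@enum_rank tvar).

Definition phi_exp1 (v : vtx) : 'X_{1..nt} :=
  (U_(rk (inl (inl (Hof cell (val v))))) + U_(rk (inl (inr (Vof cell (val v)))))
   + \sum_(i | inF i (val v)) U_(rk (inr i)))%MM.

Definition phi_exp (mu : 'X_{1..nv}) : 'X_{1..nt} :=
  (\sum_(j < nv) phi_exp1 (enum_val j) *+ mu j)%MM.

Lemma phi_expD mu1 mu2 : phi_exp (mu1 + mu2)%MM = (phi_exp mu1 + phi_exp mu2)%MM.
Proof.
rewrite /phi_exp -big_split /=; apply: eq_bigr => j _.
by apply/mnmP => k; rewrite !(mnmDE, mulmnE) mulnDr.
Qed.

Lemma phi_expU j : phi_exp U_(j) = phi_exp1 (enum_val j).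
Proof.
rewrite /phi_exp (bigD1 j) //= mnm1E eqxx big1 ?addm0 // => i /negbTE ij.
by rewrite mnm1E eq_sym ij.
Qed.

Lemma phi_expE mu k : phi_exp mu k = (\sum_(j < nv) mu j * phi_exp1 (enum_val j) k)%N.
Proof. by rewrite mnm_sumE; apply: eq_bigr => j _; rewrite mulmnE mulnC. Qed.

Lemma phi_exp1_hor v H : phi_exp1 v (rk (inl (inl H))) = (Hof cell (val v) == H).
Proof.
rewrite !mnmDE mnm_sumE big1 => [|i _]; last by rewrite mnm1E (inj_eq enum_rank_inj).
rewrite !mnm1E !(inj_eq enum_rank_inj) addn0 /= addn0.
by congr nat_of_bool; apply/eqP/eqP => [[]|->].
Qed.

Lemma phi_exp1_ver v V : phi_exp1 v (rk (inl (inr V))) = (Vof cell (val v) == V).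
Proof.
rewrite !mnmDE mnm_sumE big1 => [|i _]; last by rewrite mnm1E (inj_eq enum_rank_inj).
rewrite !mnm1E !(inj_eq enum_rank_inj) /= addn0.
by congr nat_of_bool; apply/eqP/eqP => [[]|->].
Qed.

Lemma phi_exp1_quad v i : phi_exp1 v (rk (inr i)) = inF i (val v).
Proof.
rewrite !mnmDE mnm_sumE !mnm1E !(inj_eq enum_rank_inj) /= big_mkcond (bigD1 i) //=.
rewrite big1 => [|i' i'i]; last first.
  case: ifP => //; rewrite mnm1E (inj_eq enum_rank_inj) => _.
  by apply/eqP; rewrite eqb0; apply: contra i'i => /eqP [->].
by case: ifP; rewrite ?mnm1E ?eqxx.
Qed.

Lemma phi_xE v : phi_x K inF v = 'X_[phi_exp1 v].
Proof. by rewrite /phi_x /yv mprodXE -!mpolyXD. Qed.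

Lemma phiX mu : phi inF ('X_[mu] : S) = 'X_[phi_exp mu].
Proof.
rewrite /phi (mmapX _ (@mpolyC _ K)) /mmap1.
under eq_bigr => j _ do rewrite phi_xE.
by rewrite mprodXnE.
Qed.

(* With [mpolyC] in place of the lambda in [phi], the canonical ring-morphism structure
   of [mmap] applies. *)
Lemma phi_rmorphE (p : S) :
  phi inF p = mmap (@mpolyC _ K) (fun j => phi_x K inF (enum_val j : vtx)) p.
Proof. by []. Qed.

Lemma phi_coef (p : S) nu :
  (phi inF p)@_nu = \sum_(m <- msupp p) p@_m * (phi_exp m == nu)%:R.
Proof.
rewrite {1}(mpolyE p) phi_rmorphE rmorph_sum raddf_sum; apply: eq_bigr => m _.
by rewrite -mul_mpolyC rmorphM /= mmapC -phi_rmorphE phiX mcoeffCM mcoeffX.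
Qed.

Lemma phi_exp_eq_witness mu1 mu2 j k : phi_exp mu1 = phi_exp mu2 ->
  (0 < mu1 j)%N -> (0 < phi_exp1 (enum_val j) k)%N ->
  exists2 j', (0 < mu2 j')%N & (0 < phi_exp1 (enum_val j') k)%N.
Proof.
move=> eq12 mu1j jk.
have : (0 < phi_exp mu2 k)%N.
  by rewrite -eq12 phi_expE sum_muln_gt0; apply/existsP; exists j; rewrite mu1j.
by rewrite phi_expE sum_muln_gt0 => /existsP [j' /andP [? ?]]; exists j'.
Qed.

End ToricMap.

Section Reduction.
Variables (K : fieldType) (M N : nat) (cell : nat -> nat -> bool).
Variables (I : finType) (inF : I -> pt M N -> bool).
Local Notation pt := (pt M N).
Local Notation vtx := (vtx M N cell).
Local Notation S := (Sring K M N cell).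
Local Notation nv := #|{: vtx}|.
Local Notation phi_exp := (@phi_exp M N cell I inF).
Local Notation phi_exp1 := (@phi_exp1 M N cell I inF).

Lemma inner_rect (a b : pt) : inner cell a b ->
  [/\ cx a < cx b, cy a < cy b &
      forall x y, cx a <= x < cx b -> cy a <= y < cy b -> cell x y].
Proof.
case/and3P=> ab1 ab2 /forallP rect; split=> // x y xab yab.
have xM : x < M.+1 by have := cx_le b; lia.
have yN : y < N.+1 by have := cy_le b; lia.
by have := rect (Ordinal xM, Ordinal yN); rewrite /cx /cy /= in xab yab *; rewrite xab yab.
Qed.

Lemma not_inner_noncell (a b : pt) : cx a < cx b -> cy a < cy b -> ~~ inner cell a b ->
  exists x y, [/\ cx a <= x < cx b, cy a <= y < cy b & ~~ cell x y].
Proof.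
rewrite /inner => -> -> /= /forallPn [c]; rewrite negb_imply => /andP [/andP [xc yc] nc].
by exists (cx c), (cy c).
Qed.

Lemma inner_vertexl (a b : pt) : inner cell a b -> is_vertex cell a.
Proof.
case/inner_rect=> ab1 ab2 rect; apply/existsP; exists a.
by rewrite rect ?leqnn ?leqnSn ?ab1 ?ab2.
Qed.

Lemma inner_vertexr (a b : pt) : inner cell a b -> is_vertex cell b.
Proof.
case/inner_rect=> ab1 ab2 rect.
have xM : (cx b).-1 < M.+1 by have := cx_le b; lia.
have yN : (cy b).-1 < N.+1 by have := cy_le b; lia.
apply/existsP; exists (Ordinal xM, Ordinal yN); rewrite /cx /cy /= in ab1 ab2 rect *.
by rewrite rect; lia.
Qed.

Definition vpt (j : 'I_nv) : pt := val (enum_val j).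
Definition vx (j : 'I_nv) : nat := cx (vpt j).
Definition vy (j : 'I_nv) : nat := cy (vpt j).

(* No two variables of x^mu sit at the upper-left and lower-right corners of an inner
   interval, i.e. no binomial of I_P applies to x^mu. *)
Definition reduced (mu : 'X_{1..nv}) : bool :=
  [forall a : 'I_nv, forall b : 'I_nv, (0 < mu a) && (0 < mu b) ==>
     ~~ inner cell ((vpt a).1, (vpt b).2) ((vpt b).1, (vpt a).2)].

Lemma reduced_noncell mu a b : reduced mu -> 0 < mu a -> 0 < mu b ->
  vx a < vx b -> vy b < vy a ->
  exists x y, [/\ vx a <= x < vx b, vy b <= y < vy a & ~~ cell x y].
Proof.
move=> /forallP /(_ a) /forallP /(_ b) red mua mub ab ba.
move: red; rewrite mua mub => /= red.
exact: (@not_inner_noncell ((vpt a).1, (vpt b).2) ((vpt b).1, (vpt a).2)).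
Qed.

Lemma reduced_le (mu nu : 'X_{1..nv}) : (nu <= mu)%MM -> reduced mu -> reduced nu.
Proof.
move=> /forallP le /forallP red; apply/forallP => a; apply/forallP => b.
apply/implyP => /andP [nu_a nu_b]; move/forallP/(_ b)/implyP: (red a); apply.
by rewrite (leq_trans nu_a (le a)) (leq_trans nu_b (le b)).
Qed.

Definition pot (mu : 'X_{1..nv}) : nat := \sum_(j < nv) mu j * (vx j * vy j).

Lemma potD mu1 mu2 : pot (mu1 + mu2)%MM = pot mu1 + pot mu2.
Proof.
by rewrite /pot -big_split; apply: eq_bigr => j _; rewrite mnmDE mulnDl.
Qed.

Lemma potU j : pot U_(j) = vx j * vy j.
Proof.
rewrite /pot (bigD1 j) //= mnm1E eqxx mul1n big1 ?addn0 // => i /negbTE ij.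
by rewrite mnm1E eq_sym ij.
Qed.

Lemma pot_le mu : pot mu <= mdeg mu * (M * N).
Proof.
rewrite mdegE big_distrl /=; apply: leq_sum => j _.
by rewrite leq_mul2l leq_mul ?cx_le ?cy_le ?orbT.
Qed.

Hypothesis inF_inner : forall a b c d : pt, inner cell a b ->
  cx c = cx a -> cy c = cy b -> cx d = cx b -> cy d = cy a ->
  forall i, inF i a + inF i b = inF i c + inF i d.

Lemma phi_exp1_inner (a b c d : vtx) : inner cell (val a) (val b) ->
  cx (val c) = cx (val a) -> cy (val c) = cy (val b) ->
  cx (val d) = cx (val b) -> cy (val d) = cy (val a) ->
  (phi_exp1 a + phi_exp1 b = phi_exp1 c + phi_exp1 d)%MM.
Proof.
move=> ab ca cb db da; have [ab1 ab2 rect] := inner_rect ab.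
have Had : Hof cell (val a) = Hof cell (val d).
  by apply/Hof_eq; split=> // x xab; rewrite /hedge rect //; lia.
have Hbc : Hof cell (val b) = Hof cell (val c).
  apply/Hof_eq; split=> // x xab; rewrite /hedge; apply/orP; right.
  by rewrite rect; lia.
have Vac : Vof cell (val a) = Vof cell (val c).
  by apply/Vof_eq; split=> // y yab; rewrite /vedge rect //; lia.
have Vbd : Vof cell (val b) = Vof cell (val d).
  apply/Vof_eq; split=> // y yab; rewrite /vedge; apply/orP; right.
  by rewrite rect; lia.
apply/mnmP => k; rewrite mnmDE [RHS]mnmDE -(enum_valK k).
case: (enum_val k) => [[H|V]|i].
- by rewrite !phi_exp1_hor Had Hbc addnC.
- by rewrite !phi_exp1_ver Vac Vbd.
- by rewrite !phi_exp1_quad; exact: inF_inner.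
Qed.

Lemma xvE (v : vtx) : xv K v = 'X_[U_(enum_rank v)].
Proof. by []. Qed.

Lemma phi_inner_binom (g : S) : inner_binom g -> phi inF g = 0%R.
Proof.
case=> a [b [c [d [ab [ca cb] [db da] ->]]]].
rewrite phi_rmorphE rmorphB /= -!phi_rmorphE !xvE -!mpolyXD !phiX !phi_expD !phi_expU.
by rewrite !enum_rankK (phi_exp1_inner ab ca cb db da) subrr.
Qed.

Lemma reduce_step mu : ~~ reduced mu -> exists mu', [/\ phi_exp mu' = phi_exp mu,
  mdeg mu' = mdeg mu, pot mu < pot mu' & polyomino_ideal ('X_[mu] - 'X_[mu'] : S)%R].
Proof.
case/forallPn=> a /forallPn [b]; rewrite negb_imply negbK => /andP [/andP [mua mub] cd].
have [ab1 ba2] : vx a < vx b /\ vy b < vy a by case/inner_rect: cd.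
pose c : vtx := exist (is_vertex cell) _ (inner_vertexl cd).
pose d : vtx := exist (is_vertex cell) _ (inner_vertexr cd).
have [cxa cyb dxb dya] : [/\ vx (enum_rank c) = vx a, vy (enum_rank c) = vy b,
                             vx (enum_rank d) = vx b & vy (enum_rank d) = vy a].
  by rewrite /vx /vy /vpt !enum_rankK.
have [mu0 mu_split] : exists mu0, mu = (mu0 + U_(a) + U_(b))%MM.
  exists (mu - U_(a) - U_(b))%MM.
  have ab : a != b by apply: contraTneq ab1 => ->; rewrite ltnn.
  rewrite -addmA [(U_(a) + _)%MM]addmC addmA !submK ?mnm1_le //.
  by rewrite mnmBE mnm1E (negbTE ab) subn0.
exists (mu0 + U_(enum_rank c) + U_(enum_rank d))%MM; split.
- rewrite mu_split -!addmA !phi_expD !phi_expU !enum_rankK.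
  by rewrite (@phi_exp1_inner c d (enum_val a) (enum_val b) cd).
- by rewrite mu_split !mdegD !mdeg1.
- by rewrite mu_split !potD !potU cxa cyb dxb dya -!addnA ltn_add2l rearrangement_ltn.
have -> : ('X_[mu] - 'X_[mu0 + U_(enum_rank c) + U_(enum_rank d)] : S)%R =
    (- 'X_[mu0] * (xv K c * xv K d - xv K (enum_val a) * xv K (enum_val b)))%R.
  by rewrite !xvE !enum_valK mu_split !mpolyXD mulNr mulrBr opprB !mulrA.
apply: ideal_genMl; apply: mem_ideal_gen.
by exists c, d, (enum_val a), (enum_val b).
Qed.

Lemma normal_form_exists mu : exists mu', [/\ reduced mu', phi_exp mu' = phi_exp mu &
  polyomino_ideal ('X_[mu] - 'X_[mu'] : S)%R].
Proof.
have [n] := ubnP (mdeg mu * (M * N) - pot mu); elim: n mu => // n IH mu lt_n.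
have [red | /reduce_step [mu1 [phi1 deg1 pot1 I1]]] := boolP (reduced mu).
  by exists mu; split=> //; rewrite subrr; apply: ideal_gen0.
have [|mu2 [red2 phi2 I2]] := IH mu1; first by have := pot_le mu1; lia.
exists mu2; split=> //; first by rewrite phi2.
by rewrite -(subrKA ('X_[mu1] : S)); apply: ideal_genD.
Qed.

Lemma phiZX c mu : phi inF (c *: 'X_[mu] : S)%R = (c *: 'X_[phi_exp mu])%R.
Proof. by rewrite -!mul_mpolyC phi_rmorphE rmorphM /= mmapC -phi_rmorphE phiX. Qed.

Lemma normal_form_poly (p : S) : exists2 q : S, all reduced (msupp q) &
  phi inF q = phi inF p /\ polyomino_ideal (p - q)%R.
Proof.
pose F r : S := (\sum_(m <- r) p@_m *: 'X_[m])%R.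
suff /(_ (msupp p)) : forall r, exists2 q : S, all reduced (msupp q) &
    phi inF q = phi inF (F r) /\ polyomino_ideal (F r - q)%R by rewrite /F -mpolyE.
elim=> [|m r [q red [phiq Iq]]].
  exists 0%R; first by have /eqP -> : msupp (0 : S) == [::] by rewrite msupp_eq0.
  by rewrite /F big_nil subrr; split=> //; apply: ideal_gen0.
have [mu' [red' phi' I']] := normal_form_exists m.
exists (p@_m *: 'X_[mu'] + q)%R.
  apply/allP => s /msuppD_le; rewrite mem_cat => /orP [/msuppZ_le|/(allP red)//].
  by rewrite msuppX mem_seq1 => /eqP ->.
rewrite /F big_cons -/(F r); split.
  by rewrite !phi_rmorphE !rmorphD /= -!phi_rmorphE !phiZX phi' phiq.
rewrite opprD addrACA -scalerBr -mul_mpolyC.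
by apply: ideal_genD => //; apply: ideal_genMl.
Qed.

Hypothesis reduced_inj : forall mu1 mu2, reduced mu1 -> reduced mu2 ->
  phi_exp mu1 = phi_exp mu2 -> mu1 = mu2.

Lemma reduced_phi_eq0 (q : S) : all reduced (msupp q) -> phi inF q = 0%R -> q = 0%R.
Proof.
move=> red phi0; apply/mpolyP => s; rewrite mcoeff0.
have [sq|/memN_msupp_eq0 //] := boolP (s \in msupp q).
have := congr1 (mcoeff (phi_exp s)) phi0.
rewrite phi_coef mcoeff0 (big_rem s sq) /= eqxx mulr1 big_seq big1 ?addr0 // => m.
rewrite (mem_rem_uniq _ (msupp_uniq q)) inE => /andP [ms mq].
suff /negbTE -> : phi_exp m != phi_exp s by rewrite mulr0.
by apply: contra ms => /eqP/reduced_inj -> //; apply: (allP red).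
Qed.

Theorem polyomino_ideal_toric (p : S) : polyomino_ideal p <-> toric_ideal inF p.
Proof.
split=> [[s [Gs ->]] | phip].
  rewrite /toric_ideal phi_rmorphE rmorph_sum big1_seq //= => g gs; have Gg := Gs g gs.
  by rewrite rmorphM /= -!phi_rmorphE (phi_inner_binom Gg) mulr0.
have [q red [phiq Iq]] := normal_form_poly p.
by rewrite -[p]subr0 -(reduced_phi_eq0 red (etrans phiq phip)).
Qed.

End Reduction.

Lemma lex_key (N x1 x2 y1 y2 : nat) : y1 <= N -> y2 <= N ->
  x1 * N.+1 + y1 <= x2 * N.+1 + y2 -> x1 <= x2 /\ (x1 = x2 -> y1 <= y2).
Proof. by move=> y1N y2N key; split=> [|e]; [nia | move: key; rewrite e; lia]. Qed.

Section Partners.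
Variables (M N : nat) (cell : nat -> nat -> bool).
Variables (I : finType) (inF : I -> pt M N -> bool).
Local Notation nv := #|{: vtx M N cell}|.
Local Notation phi_exp := (@phi_exp M N cell I inF).
Local Notation vpt := (@vpt M N cell).
Local Notation vx := (@vx M N cell).
Local Notation vy := (@vy M N cell).
Variables (mu1 mu2 : 'X_{1..nv}).
Hypothesis phi12 : phi_exp mu1 = phi_exp mu2.

Lemma hor_partner j : 0 < mu1 j -> exists2 j', 0 < mu2 j' &
  vy j' = vy j /\
  forall x, minn (vx j') (vx j) <= x < maxn (vx j') (vx j) -> hedge cell x (vy j').
Proof.
move=> mu1j; have [|j' mu2j'] := @phi_exp_eq_witness _ _ _ _ inF _ _ _
  (enum_rank (inl (inl (Hof cell (vpt j))) : tvar M N I)) phi12 mu1j.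
  by rewrite phi_exp1_hor eqxx.
by rewrite phi_exp1_hor lt0b => /eqP/Hof_eq; exists j'.
Qed.

Lemma ver_partner j : 0 < mu1 j -> exists2 j', 0 < mu2 j' &
  vx j' = vx j /\
  forall y, minn (vy j') (vy j) <= y < maxn (vy j') (vy j) -> vedge cell (vx j') y.
Proof.
move=> mu1j; have [|j' mu2j'] := @phi_exp_eq_witness _ _ _ _ inF _ _ _
  (enum_rank (inl (inr (Vof cell (vpt j))) : tvar M N I)) phi12 mu1j.
  by rewrite phi_exp1_ver eqxx.
by rewrite phi_exp1_ver lt0b => /eqP/Vof_eq; exists j'.
Qed.

Lemma quad_partner j i : 0 < mu1 j -> inF i (vpt j) -> exists2 j', 0 < mu2 j' & inF i (vpt j').
Proof.
move=> mu1j ij; have [|j' mu2j'] := @phi_exp_eq_witness _ _ _ _ inF _ _ _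
  (enum_rank (inr i : tvar M N I)) phi12 mu1j.
  by rewrite phi_exp1_quad lt0b.
by rewrite phi_exp1_quad lt0b; exists j'.
Qed.

Lemma phi_exp_eq_neq0 : mu1 != 0%MM -> mu2 != 0%MM.
Proof.
apply: contra_neq => mu2_0; apply/mnmP => j; rewrite mnm0E; apply/eqP.
rewrite -leqn0 leqNgt; apply/negP => /hor_partner [j'].
by rewrite mu2_0 mnm0E.
Qed.

End Partners.

Section LexMin.
Variables (M N : nat) (cell : nat -> nat -> bool).
Local Notation nv := #|{: vtx M N cell}|.
Local Notation vpt := (@vpt M N cell).
Local Notation vx := (@vx M N cell).
Local Notation vy := (@vy M N cell).

Definition lexmin (mu : 'X_{1..nv}) (j : 'I_nv) : Prop :=
  0 < mu j /\ forall k, 0 < mu k -> vx j <= vx k /\ (vx j = vx k -> vy j <= vy k).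

Lemma exists_lexmin mu : mu != 0%MM -> exists j, lexmin mu j.
Proof.
move=> nz; have [j0 mu_j0] : exists j0, 0 < mu j0.
  apply/existsP; move: nz; apply: contraR => /existsPn none.
  by apply/eqP/mnmP => j; rewrite mnm0E; apply/eqP; rewrite -leqn0 leqNgt none.
pose key j := vx j * N.+1 + vy j.
have [j mu_j min_j] := @arg_minnP _ j0 (fun j => 0 < mu j) key mu_j0.
by exists j; split=> // k /min_j; apply: lex_key; apply: cy_le.
Qed.

Lemma vpt_inj j1 j2 : vx j1 = vx j2 -> vy j1 = vy j2 -> j1 = j2.
Proof.
rewrite /vx /vy /vpt /cx /cy => /ord_inj ex /ord_inj ey.
by apply/enum_val_inj/val_inj; rewrite [LHS]surjective_pairing ex ey -surjective_pairing.
Qed.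

Lemma lexmin_vx (I : finType) (inF : I -> pt M N -> bool) mu1 mu2 j1 j2 :
  @phi_exp M N cell I inF mu1 = phi_exp inF mu2 -> 0 < mu1 j1 -> lexmin mu2 j2 ->
  vx j2 <= vx j1.
Proof.
move=> phi12 mu1j1 [_ min2]; have [j' mu2j' [xj' _]] := ver_partner phi12 mu1j1.
by have [] := min2 j' mu2j'; rewrite xj'.
Qed.

End LexMin.

Section GridPolyomino.
Variables (m n r s : nat) (ha hb : 'I_r -> 'I_s -> nat * nat).
Hypothesis grid : @is_grid m n r s ha hb.
Local Notation cell := (@grid_cell m n r s ha hb).
Local Notation inF := (@grid_inF m n r s ha).
Local Notation pt := (pt m n).
Local Notation ax i j := (ha i j).1.
Local Notation ay i j := (ha i j).2.
Local Notation bx i j := (hb i j).1.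
Local Notation by_ i j := (hb i j).2.
Local Notation nv := #|{: vtx m n cell}|.
Local Notation vx := (@vx m n cell).
Local Notation vy := (@vy m n cell).
Local Notation phi_exp := (@phi_exp m n cell _ inF).

Lemma hole_bounds i j : [/\ 1 < ax i j, ax i j < bx i j & bx i j < m] /\
                        [/\ 1 < ay i j, ay i j < by_ i j & by_ i j < n].
Proof. by case: grid => _ bounds _ _ _; apply: bounds. Qed.

Lemma hole_colE i j j' : ax i j = ax i j' /\ bx i j = bx i j'.
Proof. by case: grid => _ _ cols _ _; apply: cols. Qed.

Lemma hole_rowE i i' j : ay i j = ay i' j /\ by_ i j = by_ i' j.
Proof. by case: grid => _ _ _ rows _; apply: rows. Qed.

Lemma hole_col_lt (i1 i2 : 'I_r) j : i1 < i2 -> bx i1 j < ax i2 j.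
Proof.
have next (i i' : 'I_r) : i' = i.+1 :> nat -> ax i' j = bx i j + 1.
  by case: grid => _ _ _ _ [adj _]; apply: adj.
move=> lt12; have [d] : exists d, i2 = i1 + d.+1 :> nat by exists (i2 - i1.+1); lia.
elim: d i2 {lt12} => [|d IH] i2 e; first by rewrite (next i1 i2); lia.
have lt_r : i1 + d.+1 < r by have := ltn_ord i2; lia.
have [[_ i'_wide _] _] := hole_bounds (Ordinal lt_r) j.
by rewrite (next (Ordinal lt_r) i2) /=; [have := IH (Ordinal lt_r) erefl; lia | lia].
Qed.

Lemma hole_col_mono (i1 i2 : 'I_r) j : i1 <= i2 -> ax i1 j <= ax i2 j.
Proof.
rewrite leq_eqVlt => /orP [/eqP/val_inj -> // | lt12].
by have := hole_col_lt j lt12; have [[_ ? _] _] := hole_bounds i1 j; lia.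
Qed.

Lemma grid_noncell x y : 1 <= x -> x < m -> 1 <= y -> y < n -> ~~ cell x y ->
  exists i j, ax i j <= x < bx i j /\ ay i j <= y < by_ i j.
Proof.
rewrite /grid_cell => -> -> -> -> /=; rewrite negbK => /existsP [i /existsP [j]].
by case/and4P => *; exists i, j; split; apply/andP.
Qed.

Lemma grid_hole_noncell i j x y :
  ax i j <= x < bx i j -> ay i j <= y < by_ i j -> cell x y = false.
Proof.
move=> /andP [x1 x2] /andP [y1 y2]; apply/negbTE; rewrite /grid_cell !negb_and negbK.
rewrite orbA orbA orbA orbC; apply/orP; left.
by apply/existsP; exists i; apply/existsP; exists j; lia.
Qed.

Lemma vtx_bounds (j : 'I_nv) :
  1 <= vx j <= m /\ 1 <= vy j <= n.
Proof.
rewrite /vx /vy /vpt; case: (enum_val j) => v /=.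
by case/existsP=> c /and3P [/and5P [? ? ? ? _] ? ?]; lia.
Qed.

Lemma grid_inF_inner (a b c d : pt) : inner cell a b ->
  cx c = cx a -> cy c = cy b -> cx d = cx b -> cy d = cy a ->
  forall ij, inF ij a + inF ij b = inF ij c + inF ij d.
Proof.
case/(inner_rect (M:=m))=> ab1 ab2 rect ca cb db da [i j].
rewrite /grid_inF /= ca cb db da.
have [corner_in|] := boolP ((cx a <= ax i j < cx b) && (cy a <= ay i j < cy b)).
  case/andP: corner_in => xin yin; have [[_ ? _] [_ ? _]] := hole_bounds i j.
  by have := rect _ _ xin yin; rewrite (@grid_hole_noncell i j) //; lia.
lia.
Qed.

Lemma hedge_hole i j x y : ax i j <= x < bx i j -> ay i j < y < by_ i j -> ~~ hedge cell x y.
Proof.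
move=> xin yin; rewrite /hedge negb_or negb_and.
by rewrite !(@grid_hole_noncell i j) ?orbT //; lia.
Qed.

Lemma vedge_hole i j x y : ax i j < x < bx i j -> ay i j <= y < by_ i j -> ~~ vedge cell x y.
Proof.
move=> xin yin; rewrite /vedge negb_or negb_and.
by rewrite !(@grid_hole_noncell i j) ?orbT //; lia.
Qed.

Lemma column_strip j i x0 : 1 <= x0 -> (forall k, ~~ (ax k j < x0 < bx k j)) ->
  x0 <= ax i j ->
  exists i', x0 <= ax i' j /\ forall x y, x0 <= x < ax i' j -> 1 <= y < n -> cell x y.
Proof.
move=> x0_pos no_straddle x0_i.
have [i' x0_i' min_i'] := @arg_minnP _ i (fun k : 'I_r => x0 <= ax k j) val x0_i.
exists i'; split=> // x y xin yin; apply/negPn/negP => nc.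
have [[_ i'_wide i'_m] _] := hole_bounds i' j.
have x_pos : 1 <= x by lia.
have x_m : x < m by lia.
have /andP [y_pos y_n] := yin.
have [k [l [xk _]]] := grid_noncell x_pos x_m y_pos y_n nc.
have [axk bxk] := hole_colE k j l; rewrite -axk -bxk in xk.
have [lt_ki'|le_i'k] := ltnP k i'.
  have ax_x0 : ax k j < x0.
    by rewrite ltnNge; apply: contraTN lt_ki' => /min_i'; rewrite -leqNgt.
  by have := no_straddle k; lia.
by have := hole_col_mono j le_i'k; lia.
Qed.

Section LexminRow.
Variables (mu1 mu2 : 'X_{1..nv}) (j1 j2 : 'I_nv).
Hypotheses (phi21 : phi_exp mu2 = phi_exp mu1) (red1 : reduced mu1).
Hypotheses (min1 : lexmin mu1 j1) (mu2j2 : 0 < mu2 j2).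
Hypotheses (x12 : vx j1 = vx j2) (y21 : vy j2 < vy j1).

Lemma lexmin_row_hole : exists i j, [/\ vx j1 <= ax i j, vy j2 <= ay i j < vy j1 &
  forall k, ~~ (ax k j < vx j1 < bx k j)].
Proof.
have [mu1j1 min1k] := min1; have bj1 := vtx_bounds j1; have bj2 := vtx_bounds j2.
have [t mu1t [xt vcol]] := ver_partner phi21 mu2j2.
have yt : vy j1 <= vy t by have [_] := min1k t mu1t; apply; rewrite xt x12.
have vcol1 y : vy j2 <= y < vy j1 -> vedge cell (vx j1) y.
  by move=> yin; rewrite x12 -xt; apply: vcol; lia.
have [q mu1q [yq hrow]] := hor_partner phi21 mu2j2.
have xq : vx j1 < vx q.
  have [xq1 yq1] := min1k q mu1q; rewrite ltn_neqAle xq1 andbT.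
  by apply/eqP => /yq1; lia.
have yq1 : vy q < vy j1 by rewrite yq.
have [x [y [xin yin nc]]] := reduced_noncell red1 mu1j1 mu1q xq yq1.
have bq := vtx_bounds q.
have x_pos : 1 <= x by lia.
have x_m : x < m by lia.
have y_pos : 1 <= y by lia.
have y_n : y < n by lia.
have [i [j [xij yij]]] := grid_noncell x_pos x_m y_pos y_n nc.
have ay_low : vy j2 <= ay i j.
  rewrite leqNgt; apply/negP => ay_j2.
  by have := hrow x ltac:(lia); rewrite yq; apply/negP/(hedge_hole xij); lia.
have no_straddle k : ~~ (ax k j < vx j1 < bx k j).
  apply/negP => straddle; have [ayk byk] := hole_rowE i k j.
  have := vcol1 (ay i j) ltac:(lia); apply/negP/(vedge_hole straddle).
  by rewrite -ayk -byk; lia.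
by exists i, j; split=> //; [have := no_straddle i | ]; lia.
Qed.

Lemma lexmin_row_contra : False.
Proof.
have [mu1j1 min1k] := min1; have bj1 := vtx_bounds j1.
have [i [j [x_ax /andP [j2_ay ay_j1] no_straddle]]] := lexmin_row_hole.
have [i' [x_ax' strip]] := column_strip (proj1 (andP (proj1 bj1))) no_straddle x_ax.
have [ay_ii' _] := hole_rowE i i' j.
have [|t mu1t /andP [xt yt]] := quad_partner (i := (i', j)) phi21 mu2j2.
  have [? ?] : vx j2 <= ax i' j /\ vy j2 <= ay i' j by lia.
  by apply/andP.
have {xt yt} [xt yt] : vx t <= ax i' j /\ vy t <= ay i' j by [].
have [xt1 yt1] := min1k t mu1t.
have lt_x : vx j1 < vx t.
  by rewrite ltn_neqAle xt1 andbT; apply/eqP => /yt1; lia.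
have [x [y [xin yin nc]]] := reduced_noncell red1 mu1j1 mu1t lt_x ltac:(lia).
have bt := vtx_bounds t.
by rewrite strip in nc; lia.
Qed.

End LexminRow.

Lemma lexmin_vy mu1 mu2 j1 j2 : phi_exp mu2 = phi_exp mu1 -> reduced mu1 ->
  lexmin mu1 j1 -> 0 < mu2 j2 -> vx j1 = vx j2 -> vy j1 <= vy j2.
Proof.
move=> phi21 red1 min1 mu2j2 x12; rewrite leqNgt; apply/negP => y21.
exact: (lexmin_row_contra phi21 red1 min1 mu2j2 x12 y21).
Qed.

Lemma grid_reduced_inj mu1 mu2 : reduced mu1 -> reduced mu2 ->
  phi_exp mu1 = phi_exp mu2 -> mu1 = mu2.
Proof.
have [d] := ubnP (mdeg mu1); elim: d mu1 mu2 => // d IH mu1 mu2 deg1 red1 red2 phi12.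
have [mu1_0|nz1] := eqVneq mu1 0%MM.
  have [->//|nz2] := eqVneq mu2 0%MM.
  by move: (phi_exp_eq_neq0 (esym phi12) nz2); rewrite mu1_0 eqxx.
have [j min1] := exists_lexmin nz1.
have [j2 min2] := exists_lexmin (phi_exp_eq_neq0 phi12 nz1).
have x12 : vx j = vx j2.
  apply/eqP; rewrite eqn_leq (lexmin_vx (esym phi12) min2.1 min1).
  exact: (lexmin_vx phi12 min1.1 min2).
have y12 : vy j = vy j2.
  apply/eqP; rewrite eqn_leq (lexmin_vy (esym phi12) red1 min1 min2.1 x12).
  exact: (lexmin_vy phi12 red2 min2 min1.1 (esym x12)).
move: min2; rewrite -(vpt_inj x12 y12) => min2.
have le1 : (U_(j) <= mu1)%MM by rewrite mnm1_le; case: min1.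
have le2 : (U_(j) <= mu2)%MM by rewrite mnm1_le; case: min2.
rewrite -(submK le1) -(submK le2); congr (_ + _)%MM; apply: IH.
- by have := mdegD (mu1 - U_(j)) U_(j); rewrite submK // mdeg1; lia.
- exact: reduced_le (lem_subr _ _) red1.
- exact: reduced_le (lem_subr _ _) red2.
apply: (can_inj (addmK (phi_exp U_(j)))); rewrite /= -!phi_expD !submK //.
Qed.

End GridPolyomino.

Theorem theorem4p4 (K : fieldType) (m n r s : nat)
  (a b : 'I_r -> 'I_s -> (nat * nat)) :
  @is_grid m n r s a b ->
  forall p : @Sring K m n (@grid_cell m n r s a b),
    @polyomino_ideal K m n (@grid_cell m n r s a b) p <->
    @toric_ideal K m n (@grid_cell m n r s a b) _
      (@grid_inF m n r s a) p.
Proof.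
move=> grid p; apply: polyomino_ideal_toric.
  exact: grid_inF_inner.
exact: grid_reduced_inj.
Qed.
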